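(* Let $n\ge1$ and let $A_{ij}$ denote the coefficient of $u^iv^jw^{n-i-j}$ in $P_{1/n}(u,v,w)$, with $A_{ij}=0$ for pairs $(i,j)\in\mathbb{Z}^2$ not corresponding to a monomial of $P_{1/n}$. Then for all integers $i,j$: $$A_{ij}^2\ge A_{i-1,j}A_{i+1,j},\qquad A_{ij}^2\ge A_{i,j-1}A_{i,j+1},\qquad A_{ij}^2\ge A_{i-1,j+1}A_{i+1,j-1}.$$ That is, the coefficients are log-concave along every horizontal, vertical and anti-diagonal ($i+j=$const) line of the Newton polygon.
   Context: Markov polynomials. Let $x,y,z$ be indeterminates. Consider the set consisting of all rationals $\rho\in[0,1]$, each written in lowest terms $\rho=a/b$ with integers $a\ge 0$, $b\ge 1$, together with the formal symbol $1/0$. Define Laurent polynomials $M_\rho(x,y,z)$ recursively by $M_{1/0}=y$, $M_{0/1}=x$, $M_{1/1}=\frac{x^2+y^2}{z}$, and: whenever $a/b$, $c/d$ are in this set with $|ad-bc|=1$ and $(a+2c)/(b+2d)\in[0,1]$, then $M_{\frac{a+2c}{b+2d}}=\big(M_{c/d}^2+M_{\frac{a+c}{b+d}}^2\big)/M_{a/b}$. This determines $M_\rho$ for every rational $\rho\in[0,1]$. Numerator. For coprime $1\le a\le b$, $P_{a/b}(u,v,w)$ denotes the homogeneous polynomial of degree $a+b-1$ such that $M_{a/b}(x,y,z)=P_{a/b}(x^2,y^2,z^2)/(x^{a-1}y^{b-1}z^{a+b-1})$; its existence is known. *)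

From HB Require Import structures.
From mathcomp Require Import all_boot all_order all_algebra.
From mathcomp Require Import fraction.
From mathcomp Require Import mpoly.
Set Implicit Arguments. Unset Strict Implicit. Unset Printing Implicit Defensive.
Import Order.TTheory GRing.Theory Num.Theory.
Local Open Scope ring_scope.

(* Polynomial ring Z[x,y,z] (variables 'X_0 = x, 'X_1 = y, 'X_2 = z) and its
   field of fractions, in which the Laurent polynomials M_rho live. *)
Definition Pol := {mpoly int[3]}.
Definition Frac := {fraction Pol}.

Definition frac_of (p : Pol) : Frac := @FracField.tofrac Pol p.

Definition var (i : nat) : Frac := frac_of ('X_(inord i) : Pol).
Definition xv : Frac := var 0.
Definition yv : Frac := var 1.
Definition zv : Frac := var 2.

(* The index set: pairs (a,b) of naturals representing a/b in lowest terms
   with a/b in [0,1] (b >= 1), or the formal symbol 1/0. *)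
Definition in_dom (a b : nat) : bool := coprime a b && ((a <= b)%N || (b == 0)%N).

(* M : nat -> nat -> Frac, M a b standing for M_{a/b}, satisfies the defining
   relations of the Markov polynomials. *)
Definition markov_family (M : nat -> nat -> Frac) : Prop :=
  [/\ M 1%N 0%N = yv, M 0%N 1%N = xv, M 1%N 1%N = (xv ^+ 2 + yv ^+ 2) / zv &
   forall a b c d : nat,
     in_dom a b -> in_dom c d ->
     ((a * d == b * c + 1) || (b * c == a * d + 1))%N ->
     (a + 2 * c <= b + 2 * d)%N ->
     M (a + 2 * c)%N (b + 2 * d)%N
       = (M c d ^+ 2 + M (a + c)%N (b + d)%N ^+ 2) / M a b].

Definition sq_subst (P : Pol) : Pol :=
  P \mPo [tuple ('X_i : Pol) ^+ 2 | i < 3].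

Definition is_numerator (M : nat -> nat -> Frac) (a b : nat) (P : Pol) : Prop :=
  P \is (a + b - 1)%N.-homog /\
  M a b = frac_of (sq_subst P)
          / (xv ^+ (a - 1)%N * yv ^+ (b - 1)%N * zv ^+ (a + b - 1)%N).

Definition coefA (P : Pol) (n : nat) (i j : int) : int :=
  if (0 <= i) && (0 <= j) && (i + j <= n%:Z) then
    P@_[multinom [tuple `|i|%N; `|j|%N; (n - `|i| - `|j|)%N]]
  else 0.

From HB Require Import structures.
From mathcomp Require Import all_boot all_order all_algebra zify ring.
From mathcomp Require Import fraction mpoly.
Set Implicit Arguments. Unset Strict Implicit.
Import Order.TTheory GRing.Theory Num.Theory.

(* Along the edge 1/n the Markov recursion reads
   M_{1/(k+2)} M_{1/k} = x^2 + M_{1/(k+1)}^2, and M_{1/k} = Q_k(x^2,y^2,z^2) / (y^(k-1) z^k)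
   holds as soon as Q_{k+2} Q_k - Q_{k+1}^2 = u w (v w)^k.  This is the Cassini identity of
   the recurrence Q_{k+2} = (u+v+w) Q_{k+1} - v w Q_k, Q_0 = 1, Q_1 = u + v.  Splitting it
   into the first-order system Q_{k+1} = v Q_k + E_{k+1}, E_{k+1} = w E_k + u Q_k shows that
   the coefficient of u^a v^b w^c in Q_n is binom(a+b, b) binom(a+c-1, c).  Both factors are
   log-concave along rows, columns and diagonals of Pascal's triangle, hence so is their
   product along the three lines of the Newton polygon. *)

Section BinomialLogConcavity.
Local Open Scope nat_scope.

Lemma leq_of_mul_eq (x y a b : nat) : x * a = y * b -> b <= a -> 0 < a -> x <= y.
Proof. by move=> exy leba a_gt0; rewrite -(leq_pmul2r a_gt0) exy leq_mul. Qed.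

Lemma bin_logconcave n k : 'C(n, k) * 'C(n, k.+2) <= 'C(n, k.+1) ^ 2.
Proof.
have [ltnk2|lek2n] := ltnP n k.+2; first by rewrite (bin_small ltnk2) muln0.
apply: (@leq_of_mul_eq _ _ (k.+2 * (n - k)) (k.+1 * (n - k.+1))); last 2 first.
- by apply: leq_mul => //; lia.
- by rewrite muln_gt0; apply/andP; split => //; lia.
have -> : 'C(n, k) * 'C(n, k.+2) * (k.+2 * (n - k))
        = (k.+2 * 'C(n, k.+2)) * ((n - k) * 'C(n, k)) by ring.
by rewrite (mul_bin_left n k.+1) -(mul_bin_left n k); ring.
Qed.

Lemma bin_logconcave_top n k : 'C(n, k) * 'C(n.+2, k) <= 'C(n.+1, k) ^ 2.
Proof.
have [ltnk|lekn] := ltnP n k; first by rewrite (bin_small ltnk).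
apply: (@leq_of_mul_eq _ _ (n.+1 * (n.+2 - k)) ((n.+1 - k) * n.+2)); last 2 first.
- by nia.
- by rewrite muln_gt0; apply/andP; split => //; lia.
have down1 := mul_bin_down n.+1 k; have down2 := mul_bin_down n.+2 k.
have -> : 'C(n, k) * 'C(n.+2, k) * (n.+1 * (n.+2 - k))
        = (n.+1 * 'C(n, k)) * ((n.+2 - k) * 'C(n.+2, k)) by ring.
by rewrite down1 -down2; ring.
Qed.

Lemma bin_logconcave_diag n k : 'C(n, k) * 'C(n.+2, k.+2) <= 'C(n.+1, k.+1) ^ 2.
Proof.
have [ltnk|lekn] := ltnP n k; first by rewrite (bin_small ltnk).
rewrite -(bin_sub lekn) -(@bin_sub n.+2 k.+2) // -(@bin_sub n.+1 k.+1) //.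
by rewrite !subSS bin_logconcave_top.
Qed.

Lemma leq_mul_sq (x1 x2 y z1 z2 t : nat) :
  x1 * x2 <= y ^ 2 -> z1 * z2 <= t ^ 2 -> (x1 * z1) * (x2 * z2) <= (y * t) ^ 2.
Proof. by move=> lexy lezt; rewrite mulnACA expnMn leq_mul. Qed.

(* For a = 0 the second factor is 'C(c.-1, c), i.e. 1 if c = 0 and 0 otherwise. *)
Definition qcoef (a b c : nat) : nat := 'C(a + b, b) * 'C((a + c).-1, c).

Lemma qcoef_logconcave_ac a b c :
  qcoef a b c.+2 * qcoef a.+2 b c <= qcoef a.+1 b c.+1 ^ 2.
Proof.
rewrite /qcoef !addSn !addnS /=.
apply: leq_mul_sq; first exact: bin_logconcave_top.
by rewrite mulnC bin_logconcave.
Qed.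

Lemma qcoef_logconcave_bc a b c :
  qcoef a b c.+2 * qcoef a b.+2 c <= qcoef a b.+1 c.+1 ^ 2.
Proof.
rewrite /qcoef !addnS /=.
apply: leq_mul_sq; first exact: bin_logconcave_diag.
rewrite mulnC; case: (a + c) => [|N]; first by rewrite (@bin_small 1 c.+2) ?muln0.
exact: bin_logconcave_diag.
Qed.

Lemma qcoef_logconcave_ab a b c :
  qcoef a b.+2 c * qcoef a.+2 b c <= qcoef a.+1 b.+1 c ^ 2.
Proof.
rewrite /qcoef !addSn !addnS /=.
apply: leq_mul_sq; first by rewrite mulnC bin_logconcave.
by case: (a + c) => [|N]; [case: c => [|[|c]] | exact: bin_logconcave_top].
Qed.

Definition Qcoef (n a b c : nat) : nat :=
  if a + b + c == n then qcoef a b c else 0.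
Definition Ecoef (n a b c : nat) : nat :=
  if (a + b + c == n) && (0 < a) then 'C((a + b).-1, b) * 'C((a + c).-1, c) else 0.

Lemma EcoefS n a b c : Ecoef n.+1 a b c =
  (if 0 < c then Ecoef n a b c.-1 else 0) + (if 0 < a then Qcoef n a.-1 b c else 0).
Proof.
rewrite /Ecoef /Qcoef /qcoef; case: a => [|a] /=; first by rewrite !andbF !if_same.
rewrite !andbT; case: c => [|c] /=; first by rewrite !addn0 !bin0 addSn eqSS.
rewrite !addnS !addSn eqSS /=.
by case: (_ == n) => //; rewrite binS mulnDr addnC.
Qed.

Lemma QcoefS n a b c : Qcoef n.+1 a b c =
  (if 0 < b then Qcoef n a b.-1 c else 0) + Ecoef n.+1 a b c.
Proof.
rewrite /Ecoef /Qcoef /qcoef; case: a => [|a] /=.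
  rewrite andbF addn0 !add0n; case: b => [|b] /=.
    by case: c => [|c] //=; rewrite (bin_small (ltnSn c)) muln0 if_same.
  by rewrite addSn eqSS !binn.
rewrite andbT; case: b => [|b] /=; first by rewrite !addn0 !bin0.
rewrite !addSn !addnS eqSS /=.
by case: (_ == n) => //; rewrite binS mulnDl addnC.
Qed.

End BinomialLogConcavity.

Local Open Scope ring_scope.

Lemma mcoeffXUM (R : nzRingType) (k : nat) (i : 'I_k) (p : {mpoly R[k]}) m :
  ('X_i * p)@_m = if (0 < m i)%N then p@_(m - U_(i))%MM else 0.
Proof.
rewrite -commr_mpolyX; case: ifP => m_gt0.
  have leUm : (U_(i) <= m)%MM.
    by apply/mnm_lepP => j; rewrite mnm1E; case: eqP => // <-.
  by rewrite -{1}(submK leUm) addmC mcoeffMX.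
apply: memN_msupp_eq0; rewrite (perm_mem (msuppMX _ _)).
by apply/mapP => -[m' _ em]; move: m_gt0; rewrite em mnmDE mnm1E eqxx.
Qed.

Lemma lin_rec_cassini (R : comNzRingType) (s p : R) (q : nat -> R) :
  (forall k, q k.+2 = s * q k.+1 - p * q k) ->
  forall k, q k.+2 * q k - q k.+1 ^+ 2 = p ^+ k * (q 2%N * q 0%N - q 1%N ^+ 2).
Proof.
move=> q_rec; elim=> [|k IHk]; first by rewrite expr0 mul1r.
rewrite [p ^+ _]exprS -mulrA -IHk q_rec.
apply/eqP; rewrite -subr_eq0.
have -> : (s * q k.+2 - p * q k.+1) * q k.+1 - q k.+2 ^+ 2 - p * (q k.+2 * q k - q k.+1 ^+ 2)
        = q k.+2 * (s * q k.+1 - p * q k - q k.+2) by ring.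
by rewrite -q_rec subrr mulr0.
Qed.

Section MarkovDenominator.
Variables (K : fieldType) (y z : K).
Hypotheses (y_neq0 : y != 0) (z_neq0 : z != 0).

(* y^(k-1) z^k, written so as to be right also at k = 0, where M_{1/0} = y. *)
Definition markov_den (k : nat) : K := (y * z) ^+ k / y.

Lemma markov_den0 : markov_den 0 = y^-1.
Proof. by rewrite /markov_den expr0 div1r. Qed.

Lemma markov_den1 : markov_den 1 = z.
Proof. by rewrite /markov_den expr1 mulrC mulKf. Qed.

Lemma markov_denS k : markov_den k.+1 = y ^+ k * z ^+ k.+1.
Proof. by rewrite /markov_den exprMn exprS; move: (y ^+ k) (z ^+ k.+1) => s t; field. Qed.

Lemma markov_den_neq0 k : markov_den k != 0.
Proof. by rewrite mulf_neq0 ?invr_eq0 ?expf_neq0 ?mulf_neq0. Qed.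

Lemma markov_den_mul k : markov_den k * markov_den k.+2 = markov_den k.+1 ^+ 2.
Proof. by rewrite /markov_den !exprS; move: ((y * z) ^+ k) => t; field. Qed.

Lemma markov_den_cassini k : z ^+ 2 * (y ^+ 2 * z ^+ 2) ^+ k = markov_den k.+1 ^+ 2.
Proof.
rewrite /markov_den [(y * z) ^+ k.+1]exprS -[y ^+ 2 * z ^+ 2]exprMn -exprM mulnC exprM.
by move: ((y * z) ^+ k) => t; field.
Qed.

End MarkovDenominator.

Lemma markov_step_div (K : fieldType) (x a b c d0 d1 d2 : K) :
  a != 0 -> d0 != 0 -> d1 != 0 -> d0 * d2 = d1 ^+ 2 ->
  c * a = b ^+ 2 + x ^+ 2 * d1 ^+ 2 ->
  (x ^+ 2 + (b / d1) ^+ 2) / (a / d0) = c / d2.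
Proof.
move=> a_neq0 d0_neq0 d1_neq0 d2E cE.
have -> : d2 = d1 ^+ 2 / d0 by rewrite -d2E mulrC mulKf.
have -> : c = (b ^+ 2 + x ^+ 2 * d1 ^+ 2) / a by rewrite -cE mulfK.
by field; rewrite a_neq0 d0_neq0 d1_neq0.
Qed.

Local Notation i0 := (inord 0 : 'I_3).
Local Notation i1 := (inord 1 : 'I_3).
Local Notation i2 := (inord 2 : 'I_3).

Lemma inord3_eq (i j : nat) : (i < 3)%N -> (j < 3)%N ->
  ((inord i : 'I_3) == inord j) = (i == j).
Proof. by move=> lti ltj; rewrite -val_eqE /= !inordK. Qed.

Lemma mdeg3 (m : 'X_{1..3}) : mdeg m = (m i0 + m i1 + m i2)%N.
Proof.
rewrite mdegE !big_ord_recl big_ord0 addn0 addnA.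
by congr (_ + _ + _); congr (m _); apply/val_inj; rewrite /= inordK.
Qed.

Lemma multinom3E (a b c : nat) :
  let m : 'X_{1..3} := [multinom [tuple a; b; c]] in
  [/\ m i0 = a, m i1 = b & m i2 = c].
Proof. by rewrite /= !mnm_tnth !(tnth_nth 0%N) /= !inordK. Qed.

Definition u : Pol := 'X_i0.
Definition v : Pol := 'X_i1.
Definition w : Pol := 'X_i2.

Fixpoint QE (n : nat) : Pol * Pol :=
  if n is n'.+1 then
    let qe := QE n' in let e := w * qe.2 + u * qe.1 in (v * qe.1 + e, e)
  else (1, 0).
Definition Q n := (QE n).1.
Definition E n := (QE n).2.

Lemma E_S n : E n.+1 = w * E n + u * Q n. Proof. by []. Qed.
Lemma Q_S n : Q n.+1 = v * Q n + E n.+1. Proof. by []. Qed.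
Lemma Q0 : Q 0 = 1. Proof. by []. Qed.
Lemma Q1 : Q 1 = u + v. Proof. by rewrite Q_S E_S Q0 [E 0]/E /=; ring. Qed.

Lemma Q_rec n : Q n.+2 = (u + v + w) * Q n.+1 - v * w * Q n.
Proof. by rewrite Q_S E_S Q_S; ring. Qed.

Lemma Q_cassini n : Q n.+2 * Q n = Q n.+1 ^+ 2 + u * w * (v * w) ^+ n.
Proof.
apply/eqP; rewrite addrC -subr_eq (lin_rec_cassini Q_rec).
by rewrite mulrC; apply/eqP; congr (_ * _); rewrite /Q /=; ring.
Qed.

Lemma mcoeff_QE n (m : 'X_{1..3}) :
  (Q n)@_m = (Qcoef n (m i0) (m i1) (m i2))%:Z
  /\ (E n)@_m = (Ecoef n (m i0) (m i1) (m i2))%:Z.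
Proof.
have if_Posz (b : bool) (x : nat) : (if b then x%:Z else 0) = (if b then x else 0%N)%:Z.
  by case: b.
elim: n m => [|n IHn] m.
  rewrite mcoeff1 mcoeff0 -mdeg_eq0 mdeg3 /Qcoef /Ecoef /qcoef.
  by case: (m i0) (m i1) (m i2) => [|?] [|?] [|?].
have coefE : (E n.+1)@_m = (Ecoef n.+1 (m i0) (m i1) (m i2))%:Z.
  rewrite E_S mcoeffD !mcoeffXUM (proj1 (IHn _)) (proj2 (IHn _)).
  by rewrite !mnmBE !mnm1E !inord3_eq //= !subn0 !subn1 !if_Posz -PoszD EcoefS.
split=> //.
rewrite Q_S mcoeffD mcoeffXUM coefE (proj1 (IHn _)).
by rewrite !mnmBE !mnm1E !inord3_eq //= !subn0 !subn1 if_Posz -PoszD QcoefS.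
Qed.

Lemma Q_neq0 n : Q n != 0.
Proof.
apply/eqP => /(congr1 (mcoeff [multinom [tuple 0%N; n; 0%N]])).
rewrite (proj1 (mcoeff_QE _ _)) mcoeff0; case: (multinom3E 0 n 0) => -> -> ->.
by rewrite /Qcoef /qcoef addn0 eqxx binn.
Qed.

HB.instance Definition _ :=
  GRing.RMorphism.copy sq_subst (comp_mpoly [tuple ('X_i : Pol) ^+ 2 | i < 3]).
HB.instance Definition _ := GRing.RMorphism.copy frac_of (@FracField.tofrac Pol).

Lemma mcoeff_sq_subst (p : Pol) (m : 'X_{1..3}) : (sq_subst p)@_(m *+ 2)%MM = p@_m.
Proof.
rewrite /sq_subst comp_mpolyE raddf_sum [in RHS](mpolyE p) raddf_sum /=.
apply: eq_bigr => m' _.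
have -> : \prod_(i < 3) tnth [tuple ('X_i : Pol) ^+ 2 | i < 3] i ^+ m' i = 'X_[m' *+ 2].
  rewrite [RHS]mpolyXE_id; apply: eq_bigr => i _.
  by rewrite tnth_map tnth_ord_tuple mulmnE -exprM mulnC.
rewrite !mcoeffZ !mcoeffX.
have -> // : ((m' *+ 2)%MM == (m *+ 2)%MM) = (m' == m).
apply/eqP/eqP => [/mnmP m12|-> //]; apply/mnmP => i.
by have := m12 i; rewrite !mulmnE; lia.
Qed.

Definition sq_frac (p : Pol) : Frac := frac_of (sq_subst p).
HB.instance Definition _ := GRing.RMorphism.copy sq_frac (frac_of \o sq_subst)%FUN.

Lemma sq_frac0 : sq_frac 0 = 0. Proof. exact: rmorph0. Qed.
Lemma sq_frac1 : sq_frac 1 = 1. Proof. exact: rmorph1. Qed.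
Lemma sq_fracD : {morph sq_frac : p q / p + q}. Proof. exact: rmorphD. Qed.
Lemma sq_fracM : {morph sq_frac : p q / p * q}. Proof. exact: rmorphM. Qed.
Lemma sq_fracX k : {morph sq_frac : p / p ^+ k}. Proof. exact: rmorphXn. Qed.

Lemma sq_frac_inj : injective sq_frac.
Proof.
move=> p q /eqP; rewrite /sq_frac /frac_of tofrac_eq => /eqP pq_sq.
by apply/mpolyP => m; rewrite -[p@_m]mcoeff_sq_subst -[q@_m]mcoeff_sq_subst pq_sq.
Qed.

Lemma sq_frac_Q_neq0 k : sq_frac (Q k) != 0.
Proof.
apply: contra_neq (Q_neq0 k) => sqQ0; apply: sq_frac_inj.
by rewrite sqQ0 sq_frac0.
Qed.

Lemma sq_frac_X (i : 'I_3) : sq_frac 'X_i = frac_of 'X_i ^+ 2.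
Proof.
by rewrite /sq_frac /sq_subst comp_mpolyXU -tnth_nth tnth_map tnth_ord_tuple rmorphXn.
Qed.

Lemma sq_frac_u : sq_frac u = xv ^+ 2. Proof. exact: sq_frac_X. Qed.
Lemma sq_frac_v : sq_frac v = yv ^+ 2. Proof. exact: sq_frac_X. Qed.
Lemma sq_frac_w : sq_frac w = zv ^+ 2. Proof. exact: sq_frac_X. Qed.

Lemma frac_X_neq0 (i : 'I_3) : frac_of 'X_i != 0.
Proof.
rewrite /frac_of tofrac_eq0; apply/eqP => /(congr1 (mcoeff U_(i))).
by rewrite mcoeffXU eqxx mcoeff0.
Qed.

Lemma yv_neq0 : yv != 0. Proof. exact: frac_X_neq0. Qed.
Lemma zv_neq0 : zv != 0. Proof. exact: frac_X_neq0. Qed.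

Lemma markov_rec_one M : markov_family M ->
  forall k, M 1%N k.+2 = (xv ^+ 2 + M 1%N k.+1 ^+ 2) / M 1%N k.
Proof.
case=> _ M01 _ M_rec k.
have := M_rec 1%N k 0%N 1%N; rewrite !muln0 !muln1 !addn0 !addn1 addn2 M01.
by apply=> //; rewrite /in_dom coprime1n; case: k.
Qed.

Lemma markov_one_closed_form M : markov_family M ->
  forall k, M 1%N k = sq_frac (Q k) / markov_den yv zv k.
Proof.
move=> markovM; have [M10 _ M11 _] := markovM.
have den_neq0 k : markov_den yv zv k != 0 by exact: markov_den_neq0 yv_neq0 zv_neq0 k.
suff M1_pair k : M 1%N k = sq_frac (Q k) / markov_den yv zv k
    /\ M 1%N k.+1 = sq_frac (Q k.+1) / markov_den yv zv k.+1.
  by move=> k; case: (M1_pair k).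
elim: k => [|k [IHk IHk1]].
  rewrite M10 M11 (markov_den0 yv zv) (markov_den1 zv yv_neq0) Q0 Q1.
  by rewrite sq_fracD sq_frac1 sq_frac_u sq_frac_v div1r invrK.
split=> //; rewrite markov_rec_one // IHk IHk1.
apply: markov_step_div; [exact: sq_frac_Q_neq0 | exact: den_neq0 | exact: den_neq0 |
  exact: (markov_den_mul zv yv_neq0 k) |].
rewrite -(markov_den_cassini zv yv_neq0); have := congr1 sq_frac (Q_cassini k).
by rewrite sq_fracD !sq_fracM !sq_fracX sq_fracM sq_frac_u sq_frac_v sq_frac_w -mulrA.
Qed.

Lemma numerator_one_eq M n P :
  markov_family M -> (0 < n)%N -> is_numerator M 1 n P -> P = Q n.
Proof.
move=> markovM; case: n => [//|k] _ [_ MP]; apply: sq_frac_inj.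
apply: (mulIf (invr_neq0 (markov_den_neq0 yv_neq0 zv_neq0 k.+1))).
rewrite -(markov_one_closed_form markovM) MP (markov_denS zv yv_neq0).
by rewrite subnn subn1 add1n subn1 /= expr0 mul1r.
Qed.

Definition Acoef (n : nat) (i j : int) : nat :=
  if (0 <= i) && (0 <= j) && (i + j <= n%:Z)
  then qcoef `|i| `|j| (n - `|i| - `|j|) else 0.

Lemma coefA_Q n i j : coefA (Q n) n i j = (Acoef n i j)%:Z.
Proof.
rewrite /coefA /Acoef; case: ifP => // /andP[/andP[i_ge0 j_ge0] ij_le].
rewrite (proj1 (mcoeff_QE _ _)).
case: (multinom3E `|i| `|j| (n - `|i| - `|j|)) => -> -> ->.
by rewrite /Qcoef ifT //; apply/eqP; lia.
Qed.

Lemma Acoef_logconcave_row n i j :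
  (Acoef n (i - 1) j * Acoef n (i + 1) j <= Acoef n i j ^ 2)%N.
Proof.
rewrite /Acoef; case: ifP => [|_]; last by rewrite mul0n.
case: ifP => [|_]; last by rewrite muln0.
move=> /andP[/andP[? ?] ?] /andP[/andP[? ?] ?].
rewrite ifT; last by (apply/andP; split; [apply/andP; split|]; lia).
set a := absz (i - 1); set c := (n - absz (i + 1)%R - absz j)%N.
have -> : (n - a - absz j = c.+2)%N by lia.
have -> : (n - absz i - absz j = c.+1)%N by lia.
have -> : absz i = a.+1 by lia.
have -> : absz (i + 1) = a.+2 by lia.
exact: qcoef_logconcave_ac.
Qed.

Lemma Acoef_logconcave_col n i j :
  (Acoef n i (j - 1) * Acoef n i (j + 1) <= Acoef n i j ^ 2)%N.
Proof.
rewrite /Acoef; case: ifP => [|_]; last by rewrite mul0n.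
case: ifP => [|_]; last by rewrite muln0.
move=> /andP[/andP[? ?] ?] /andP[/andP[? ?] ?].
rewrite ifT; last by (apply/andP; split; [apply/andP; split|]; lia).
set b := absz (j - 1); set c := (n - absz i - absz (j + 1)%R)%N.
have -> : (n - absz i - b = c.+2)%N by lia.
have -> : (n - absz i - absz j = c.+1)%N by lia.
have -> : absz j = b.+1 by lia.
have -> : absz (j + 1) = b.+2 by lia.
exact: qcoef_logconcave_bc.
Qed.

Lemma Acoef_logconcave_antidiag n i j :
  (Acoef n (i - 1) (j + 1) * Acoef n (i + 1) (j - 1) <= Acoef n i j ^ 2)%N.
Proof.
rewrite /Acoef; case: ifP => [|_]; last by rewrite mul0n.
case: ifP => [|_]; last by rewrite muln0.
move=> /andP[/andP[? ?] ?] /andP[/andP[? ?] ?].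
rewrite ifT; last by (apply/andP; split; [apply/andP; split|]; lia).
set a := absz (i - 1); set b := absz (j - 1); set c := (n - absz i - absz j)%N.
have -> : (n - a - absz (j + 1)%R = c)%N by lia.
have -> : (n - absz (i + 1)%R - b = c)%N by lia.
have -> : absz i = a.+1 by lia.
have -> : absz (i + 1) = a.+2 by lia.
have -> : absz j = b.+1 by lia.
have -> : absz (j + 1) = b.+2 by lia.
exact: qcoef_logconcave_ab.
Qed.

Theorem theorem6p4 (M : nat -> nat -> Frac) (n : nat) (P : Pol) :
  markov_family M -> (1 <= n)%N -> is_numerator M 1 n P ->
  forall i j : int,
    [/\ coefA P n (i - 1) j * coefA P n (i + 1) j <= coefA P n i j ^+ 2,
        coefA P n i (j - 1) * coefA P n i (j + 1) <= coefA P n i j ^+ 2 &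
        coefA P n (i - 1) (j + 1) * coefA P n (i + 1) (j - 1) <= coefA P n i j ^+ 2].
Proof.
move=> markovM n_gt0 /(numerator_one_eq markovM n_gt0) -> i j.
rewrite !coefA_Q expr2 -!PoszM !lez_nat mulnn.
split; [exact: Acoef_logconcave_row | exact: Acoef_logconcave_col
       | exact: Acoef_logconcave_antidiag].
Qed.
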